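(* Let $(\Omega,d)$ be a noncomplete $L$-quasiconvex metric space which is open in its completion, and let $\mu$ be a Borel measure on $\Omega$ which is globally doubling on $(\Omega,d)$ with doubling constant $C_\mu$. Let $\alpha>0$. Then $\mu^\alpha$ is doubling on $(\Omega,k)$ for $k$-balls of radii at most $\tfrac18$, with doubling constant $4^\alpha C_\mu^m$ where $m=\lceil\log_2 8L\rceil$. Moreover, for every $R_1>0$, $\mu^\alpha$ is doubling on $(\Omega,k)$ for $k$-balls of radii at most $R_1$.
   Context: A metric space is $L$-quasiconvex if any two points $x,y$ can be joined by a curve of length at most $L\,d(x,y)$. Let $\partial\Omega$ be the boundary of $\Omega$ in its completion and $d_\Omega(x)=\operatorname{dist}(x,\partial\Omega)$. The quasihyperbolic metric is $k(x,y)=\inf_\gamma\int_\gamma\frac{ds}{d_\Omega(\gamma(s))}$, the infimum over rectifiable curves in $\Omega$ joining $x$ to $y$; $k$-balls are balls with respect to $k$. For $\alpha>0$, $\mu^\alpha(E)=\int_E d_\Omega(x)^{-\alpha}\,d\mu(x)$. A measure $\nu$ is doubling for balls of radii at most $R$ with constant $C$ if $0<\nu(B(x,2r))\le C\nu(B(x,r))<\infty$ for all $x$ and $0<r\le R$; globally doubling if this holds for all $r>0$. *)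

From HB Require Import structures.
From mathcomp Require Import all_boot all_order all_algebra.
From mathcomp Require Import all_classical all_reals all_analysis.
Set Implicit Arguments. Unset Strict Implicit. Unset Printing Implicit Defensive.
Import Order.TTheory GRing.Theory Num.Theory.
Import numFieldNormedType.Exports.
Local Open Scope classical_set_scope.
Local Open Scope ring_scope.

Section MetricDefs.
Variable R : realType.

Definition is_metric (T : Type) (d : T -> T -> R) : Prop :=
  [/\ (forall x y, 0 <= d x y),
      (forall x y, d x y = 0 <-> x = y),
      (forall x y, d x y = d y x) &
      (forall x y z, d x z <= d x y + d y z)].

Definition dball (T : Type) (d : T -> T -> R) (x : T) (r : R) : set T :=
  [set y | d x y < r].

Definition dopen (T : Type) (d : T -> T -> R) (U : set T) : Prop :=
  forall x, U x -> exists2 e : R, 0 < e & dball d x e `<=` U.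

Definition dcomplete (T : Type) (d : T -> T -> R) : Prop :=
  forall u : nat -> T,
    (forall e : R, 0 < e -> exists N, forall m n, (N <= m)%N -> (N <= n)%N -> d (u m) (u n) < e) ->
    exists l, forall e : R, 0 < e -> exists N, forall n, (N <= n)%N -> d (u n) l < e.

(* (X, dX, iota) is a completion of (T, d) in which T is open:
   iota is an isometric embedding with dense image, X is complete,
   and the image of iota is open in X. *)
Definition open_completion (T X : Type) (d : T -> T -> R) (dX : X -> X -> R)
    (iota : T -> X) : Prop :=
  [/\ is_metric dX,
      (forall x y, dX (iota x) (iota y) = d x y),
      (forall z e, 0 < e -> exists x, dX z (iota x) < e),
      dcomplete dX &
      dopen dX (range iota)].

(* distance to the boundary  (boundary = X minus the image of T) *)
Definition dist_bdry (T X : Type) (dX : X -> X -> R) (iota : T -> X) (x : T) : R :=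
  inf [set dX (iota x) z | z in ~` range iota].

Definition curve (T : Type) (d : T -> T -> R) (g : R -> T) (a b : R) : Prop :=
  a <= b /\
  forall t, a <= t <= b -> forall e, 0 < e -> exists2 del, 0 < del &
    forall s, a <= s <= b -> `|t - s| < del -> d (g t) (g s) < e.

Definition curve_length (T : Type) (d : T -> T -> R) (g : R -> T) (a b : R) : \bar R :=
  ereal_sup [set v | exists (n : nat) (t : nat -> R),
    [/\ t 0%N = a, t n = b, (forall i, (i < n)%N -> t i <= t i.+1) &
        v = (\sum_(i < n) d (g (t i)) (g (t i.+1)))%:E]].

Definition arclength_param (T : Type) (d : T -> T -> R) (g : R -> T) (a b : R)
    (gs : R -> T) : Prop :=
  forall t, a <= t <= b -> gs (fine (curve_length d g a t)) = g t.

(* line integral along gamma of rho wrt arc length, given its arc-length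
   parametrization gs: int_0^{length} rho (gs s) ds *)
Definition line_integral (rho : R -> R) (ell : R) : \bar R :=
  (\int[@lebesgue_measure R]_(s in `[0%R, ell]%classic) (rho s)%:E)%E.

Definition qh_dist (T : Type) (d : T -> T -> R) (dO : T -> R) (x y : T) : \bar R :=
  ereal_inf [set v | exists (a b : R) (g gs : R -> T),
    [/\ curve d g a b, g a = x, g b = y,
        (curve_length d g a b < +oo)%E /\ arclength_param d g a b gs &
        v = line_integral (fun s => (dO (gs s))^-1) (fine (curve_length d g a b))]].

Definition kball (T : Type) (k : T -> T -> \bar R) (x : T) (r : R) : set T :=
  [set y | (k x y < r%:E)%E].

Definition quasiconvex (T : Type) (d : T -> T -> R) (L : R) : Prop :=
  forall x y, exists (a b : R) (g : R -> T),
    [/\ curve d g a b, g a = x, g b = y & (curve_length d g a b <= (L * d x y)%:E)%E].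

Definition doubling_upto (T : Type) (nu : set T -> \bar R) (ball : T -> R -> set T)
    (Rmax C : R) : Prop :=
  forall x r, 0 < r -> r <= Rmax ->
    [/\ (0 < nu (ball x (2 * r)%R))%E, (nu (ball x (2 * r)%R) <= C%:E * nu (ball x r))%E
        & (nu (ball x r) < +oo)%E].

Definition doubling_global (T : Type) (nu : set T -> \bar R) (ball : T -> R -> set T)
    (C : R) : Prop :=
  forall x r, 0 < r ->
    [/\ (0 < nu (ball x (2 * r)%R))%E, (nu (ball x (2 * r)%R) <= C%:E * nu (ball x r))%E
        & (nu (ball x r) < +oo)%E].

Definition weighted_measure (dd : measure_display) (T : measurableType dd)
    (mu : {measure set T -> \bar R}) (dO : T -> R) (alpha : R) (E : set T) : \bar R :=
  (\int[mu]_(x in E) ((dO x) `^ (- alpha))%:E)%E.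

End MetricDefs.

From HB Require Import structures.
From mathcomp Require Import all_boot all_order all_algebra.
From mathcomp Require Import all_classical all_reals all_analysis.
From mathcomp Require Import ring lra.
Import Order.TTheory GRing.Theory Num.Theory.
Import numFieldNormedType.Exports.
Local Open Scope classical_set_scope.
Local Open Scope ring_scope.
Set Implicit Arguments. Unset Strict Implicit. Unset Printing Implicit Defensive.

(* Write c = dO x. Along a curve of length l issuing from x the weight 1/dO is
   at least 1/(c + l), so a short quasihyperbolic distance forces a short
   distance: the k-ball of radius r < 1 lies in the d-ball of radius
   r c / (1 - r), and the k-ball of any radius K lies in the d-ball of radius
   c e^K, on which dO > c e^-K.  Conversely L-quasiconvexity gives
   k(x, y) <= L d(x, y) / (c - L d(x, y)), so the d-ball of radius
   r c / (L (1 + r)) lies in the k-ball of radius r.  On all these d-balls dO is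
   comparable to c, so comparing the k-balls of radii r and 2 r through the
   sandwiching d-balls, whose radii differ by a factor at most 8 L <= 2^m,
   costs Cmu^m from the doubling of mu and 2^alpha <= 4^alpha from the weight.
   Radii between 1/8 and R1 are handled in the same way with the exponential
   bounds.  Lengths are computed through the arc-length function, which is
   additive and continuous, hence attains every value between 0 and the length. *)

Section MetricFacts.
Variables (R : realType) (T : Type) (d : T -> T -> R).
Hypothesis dm : is_metric d.

Lemma metric_ge0 x y : 0 <= d x y. Proof. by case: dm. Qed.
Lemma metric_xx x : d x x = 0. Proof. by case: dm => _ H _ _; apply/H. Qed.
Lemma metricC x y : d x y = d y x. Proof. by case: dm. Qed.
Lemma metric_le_triangle x y z : d x z <= d x y + d y z. Proof. by case: dm. Qed.
Lemma metric_eq0 x y : d x y = 0 -> x = y. Proof. by case: dm => _ H _ _ /H. Qed.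

End MetricFacts.

Section ChordSums.
Variables (R : realType) (T : Type) (d : T -> T -> R).
Hypothesis dm : is_metric d.
Variable g : R -> T.

Definition chord_sum (t : nat -> R) n := \sum_(i < n) d (g (t i)) (g (t i.+1)).

Definition chord_sums a b : set R := [set s | exists n (t : nat -> R),
  [/\ t 0%N = a, t n = b, (forall i, (i < n)%N -> t i <= t i.+1) & s = chord_sum t n]].

Lemma curve_lengthE a b : curve_length d g a b = ereal_sup (EFin @` chord_sums a b).
Proof.
rewrite /curve_length; congr ereal_sup; apply/seteqP; split => v.
  by move=> [n [t [h0 h1 h2 ->]]]; exists (chord_sum t n) => //; exists n, t.
by move=> [r [n [t [h0 h1 h2 ->]]] <-]; exists n, t.
Qed.

Lemma chord_sums_refl a : chord_sums a a 0.
Proof. by exists 0%N, (fun=> a); split => //; rewrite /chord_sum big_ord0. Qed.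

Lemma chord_sums_cons a c b s : a <= c -> chord_sums c b s ->
  chord_sums a b (d (g a) (g c) + s).
Proof.
move=> ac [n [t [t0 tn tm ->]]].
exists n.+1, (fun i => if i is j.+1 then t j else a); split => //.
- by case=> [_|i /= Hi]; [rewrite /= t0 | apply: tm].
- by rewrite /chord_sum big_ord_recl /= t0.
Qed.

Lemma chord_sums_ind (P : R -> R -> R -> Prop) :
  (forall a, P a a 0) ->
  (forall a c b s, a <= c -> chord_sums c b s -> P c b s -> P a b (d (g a) (g c) + s)) ->
  forall a b s, chord_sums a b s -> P a b s.
Proof.
move=> P0 PS a b s [n [t [t0 tn tm ->]]].
elim: n a t t0 tn tm => [|n IH] a t t0 tn tm.
  by rewrite /chord_sum big_ord0 -t0 tn.
have -> : chord_sum t n.+1 = d (g a) (g (t 1%N)) + chord_sum (fun i => t i.+1) n.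
  by rewrite /chord_sum big_ord_recl /= t0.
have tail : chord_sums (t 1%N) b (chord_sum (fun i => t i.+1) n).
  by exists n, (fun i => t i.+1); split => // i Hi; apply: tm.
apply: PS => //; first by rewrite -t0; apply: tm.
by apply: IH => // i Hi; apply: tm.
Qed.

Lemma chord_sums_le a b s : chord_sums a b s -> a <= b.
Proof. by move: a b s; apply: chord_sums_ind => // a c b s ac _; apply: le_trans. Qed.

Lemma chord_sums_xx a s : chord_sums a a s -> s = 0.
Proof.
move: a s; suff: forall a b s, chord_sums a b s -> a = b -> s = 0.
  by move=> H a s /H; apply.
apply: chord_sums_ind => // a c b s ac Hc IH ab; subst b.
have ca : c = a by apply/eqP; rewrite eq_le (chord_sums_le Hc) ac.
by subst c; rewrite (metric_xx dm) IH // add0r.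
Qed.

Lemma chord_sums_chord a b : a <= b -> chord_sums a b (d (g a) (g b)).
Proof.
by move=> ab; rewrite -[X in chord_sums _ _ X]addr0; apply: chord_sums_cons => //; apply: chord_sums_refl.
Qed.

Lemma chord_sums_cat a u b s1 s2 :
  chord_sums a u s1 -> chord_sums u b s2 -> chord_sums a b (s1 + s2).
Proof.
move=> H; move: a u s1 H s2; apply: chord_sums_ind => [a s2|a c u s ac Hc IH s2 H2].
  by rewrite add0r.
by rewrite -addrA; apply: chord_sums_cons => //; apply: IH.
Qed.

Lemma chord_sums_split a b s u : chord_sums a b s -> a <= u <= b ->
  exists s1 s2, [/\ chord_sums a u s1, chord_sums u b s2 & s <= s1 + s2].
Proof.
move=> H; move: a b s H u.
apply: chord_sums_ind => [a u /andP[au ua]|a c b s ac Hc IH u /andP[au ub]].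
  have -> : u = a by apply/eqP; rewrite eq_le au ua.
  by exists 0, 0; split; rewrite ?addr0 //; apply: chord_sums_refl.
have [uc|cu] := leP u c.
  exists (d (g a) (g u)), (d (g u) (g c) + s); split.
  - exact: chord_sums_chord.
  - exact: chord_sums_cons.
  - by rewrite addrA lerD2r metric_le_triangle.
have [s1 [s2 [H1 H2 H3]]] := IH u (andb_true_intro (conj (ltW cu) ub)).
exists (d (g a) (g c) + s1), s2; split => //.
- exact: chord_sums_cons.
- by rewrite -addrA lerD2l.
Qed.

(* Moving the left endpoint slightly to the right loses at most one chord; the
   first partition point strictly beyond [a] gives the room. *)
Lemma chord_sums_shift_start a b s : chord_sums a b s -> exists2 eta, 0 < eta &
  forall t, a < t -> t < a + eta -> t <= b ->
  exists s2, chord_sums t b s2 /\ s <= d (g a) (g t) + s2.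
Proof.
move: a b s; apply: chord_sums_ind => [a|a c b s ac Hc [eta eta0 IH]].
  by exists 1 => // t at1 _ tb; exfalso; move: (lt_le_trans at1 tb); rewrite ltxx.
have [ac'|ca] := ltP a c.
  exists (c - a); first by rewrite subr_gt0.
  move=> t at1 tc tb; rewrite addrC subrK in tc.
  exists (d (g t) (g c) + s); split; first by apply: chord_sums_cons => //; apply: ltW.
  by rewrite addrA lerD2r metric_le_triangle.
have ea : c = a by apply/eqP; rewrite eq_le ca ac.
subst c; exists eta => // t at1 tae tb.
by rewrite (metric_xx dm) add0r; apply: IH.
Qed.

Lemma chord_sums_shift_end a b s : chord_sums a b s -> exists2 eta, 0 < eta &
  forall t, b - eta < t -> t < b -> a <= t ->
  exists s1, chord_sums a t s1 /\ s <= s1 + d (g t) (g b).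
Proof.
move: a b s; apply: chord_sums_ind => [a|a c b s ac Hc [eta eta0 IH]].
  by exists 1 => // t _ ta at1; exfalso; move: (lt_le_trans ta at1); rewrite ltxx.
have [cb|bc] := ltP c b; last first.
  have ecb : c = b by apply/eqP; rewrite eq_le bc (chord_sums_le Hc).
  subst c; rewrite (chord_sums_xx Hc) addr0.
  exists 1 => // t _ tb at1; exists (d (g a) (g t)); split; first exact: chord_sums_chord.
  exact: metric_le_triangle.
exists (Num.min eta (b - c)); first by rewrite lt_min eta0 subr_gt0.
move=> t bt tb at1.
have ct : c <= t.
  have : b - (b - c) <= b - Num.min eta (b - c) by rewrite lerD2l lerN2 ge_min lexx orbT.
  by rewrite opprB addrC subrK => H; exact/ltW/(le_lt_trans H bt).
have btc : b - eta < t by apply: le_lt_trans bt; rewrite lerD2l lerN2 ge_min lexx.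
have [s1 [H1 H2]] := IH t btc tb ct.
exists (d (g a) (g c) + s1); split; first exact: chord_sums_cons.
by rewrite -addrA lerD2l.
Qed.

End ChordSums.

Section Arclength.
Variables (R : realType) (T : Type) (d : T -> T -> R).
Hypothesis dm : is_metric d.
Variables (g : R -> T) (a b : R).
Hypothesis cg : curve d g a b.
Hypothesis fin : (curve_length d g a b < +oo)%E.

Local Notation chord_sums := (chord_sums d g).

Lemma chord_sums_le_length u v s : a <= u -> v <= b -> chord_sums u v s ->
  s <= fine (curve_length d g a b).
Proof.
move=> au vb H.
have Hab := chord_sums_cat (chord_sums_cat (chord_sums_chord d g au) H) (chord_sums_chord d g vb).
have ub : ((d (g a) (g u) + s + d (g v) (g b))%:E <= curve_length d g a b)%E.
  by rewrite curve_lengthE; apply: ereal_sup_ubound; exact: ex_intro2 Hab _.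
have fin_num_len : curve_length d g a b \is a fin_num.
  by rewrite fin_numE -ltey fin andbT; apply/eqP => E; move: ub; rewrite E.
rewrite -lee_fin fineK //; apply: le_trans ub; rewrite lee_fin.
by rewrite -addrA addrC -addrA lerDl addr_ge0 // metric_ge0.
Qed.

Definition arclen u v := sup (chord_sums u v).

Lemma has_sup_chord_sums u v : a <= u -> u <= v -> v <= b -> has_sup (chord_sums u v).
Proof.
move=> au uv vb; split; first by exists (d (g u) (g v)); apply: chord_sums_chord.
by exists (fine (curve_length d g a b)) => s; apply: chord_sums_le_length.
Qed.

Lemma chord_sums_le_arclen u v s : a <= u -> v <= b -> chord_sums u v s -> s <= arclen u v.
Proof.
move=> au vb H; have uv := chord_sums_le H.
by apply: ub_le_sup => //; case: (has_sup_chord_sums au uv vb).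
Qed.

Lemma arclen_le u v x : u <= v -> (forall s, chord_sums u v s -> s <= x) -> arclen u v <= x.
Proof. by move=> uv H; apply: ge_sup => //; exists (d (g u) (g v)); apply: chord_sums_chord. Qed.

Lemma arclen_ge_dist u v : a <= u -> u <= v -> v <= b -> d (g u) (g v) <= arclen u v.
Proof. by move=> au uv vb; apply: chord_sums_le_arclen => //; apply: chord_sums_chord. Qed.

Lemma arclen_ge0 u v : a <= u -> u <= v -> v <= b -> 0 <= arclen u v.
Proof. by move=> au uv vb; apply: le_trans (arclen_ge_dist au uv vb); apply: metric_ge0. Qed.

Lemma arclen_xx u : arclen u u = 0.
Proof.
apply/eqP; rewrite eq_le; apply/andP; split.
  by apply: arclen_le => // s /(chord_sums_xx dm) ->.
apply: ub_le_sup; last exact: chord_sums_refl.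
by exists 0 => s /(chord_sums_xx dm) ->.
Qed.

Lemma arclen_add u v w : a <= u -> u <= v -> v <= w -> w <= b ->
  arclen u v + arclen v w = arclen u w.
Proof.
move=> au uv vw wb; have uw := le_trans uv vw.
apply/eqP; rewrite eq_le; apply/andP; split.
  rewrite -lerBrDl; apply: arclen_le => // s2 H2.
  rewrite lerBrDl addrC -lerBrDl; apply: arclen_le => // s1 H1.
  rewrite lerBrDl addrC; apply: chord_sums_le_arclen => //.
  exact: chord_sums_cat H1 H2.
apply: arclen_le => // s H.
have [s1 [s2 [H1 H2 H3]]] := chord_sums_split dm H (andb_true_intro (conj uv vw)).
apply: (le_trans H3); apply: lerD.
  by apply: chord_sums_le_arclen => //; apply: le_trans vw wb.
by apply: chord_sums_le_arclen => //; apply: le_trans au uv.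
Qed.

Lemma curve_length_arclen u v : a <= u -> u <= v -> v <= b ->
  curve_length d g u v = (arclen u v)%:E.
Proof.
move=> au uv vb; rewrite curve_lengthE ereal_sup_EFin //; last first.
  by exists (d (g u) (g v)); apply: chord_sums_chord.
by exists (fine (curve_length d g a b)) => s; apply: chord_sums_le_length.
Qed.

(* Right continuity of [arclen t0]: near-optimal partitions of [t0, b] lose
   little when started at a nearby t, and the chord from t0 to t is small by
   continuity of g. *)
Lemma arclen_small_right t0 : a <= t0 -> t0 < b -> forall e, 0 < e ->
  exists2 eta, 0 < eta & forall t, t0 < t -> t < t0 + eta -> t <= b -> arclen t0 t < e.
Proof.
move=> at0 t0b e e0.
have e20 : 0 < e / 2 by rewrite divr_gt0.
case: cg => _ /(_ t0 (andb_true_intro (conj at0 (ltW t0b))) _ e20) [del del0 Hdel].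
have [s Hs Hss] := sup_adherent e20 (has_sup_chord_sums at0 (ltW t0b) (lexx b)).
have [eta eta0 Heta] := chord_sums_shift_start dm Hs.
exists (Num.min del eta); first by rewrite lt_min del0 eta0.
move=> t t0t tt0 tb.
have tt0e : t < t0 + eta by apply: lt_le_trans tt0 _; rewrite lerD2l ge_min lexx orbT.
have [s2 [H2 H3]] := Heta t t0t tt0e tb.
have at1 : a <= t by apply: le_trans at0 (ltW t0t).
have dgt : d (g t0) (g t) < e / 2.
  apply: Hdel; first by rewrite at1 tb.
  rewrite distrC ger0_norm ?subr_ge0 ?ltW // ltrBlDl.
  by apply: lt_le_trans tt0 _; rewrite lerD2l ge_min lexx.
have s2le : s2 <= arclen t b by apply: chord_sums_le_arclen.
have := arclen_add at0 (ltW t0t) tb (lexx b).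
rewrite -/(arclen t0 b) in Hss; lra.
Qed.

Lemma arclen_small_left t0 : a < t0 -> t0 <= b -> forall e, 0 < e ->
  exists2 eta, 0 < eta & forall t, t0 - eta < t -> t < t0 -> a <= t -> arclen t t0 < e.
Proof.
move=> at0 t0b e e0.
have e20 : 0 < e / 2 by rewrite divr_gt0.
case: cg => _ /(_ t0 (andb_true_intro (conj (ltW at0) t0b)) _ e20) [del del0 Hdel].
have [s Hs Hss] := sup_adherent e20 (has_sup_chord_sums (lexx a) (ltW at0) t0b).
have [eta eta0 Heta] := chord_sums_shift_end dm Hs.
exists (Num.min del eta); first by rewrite lt_min del0 eta0.
move=> t t0t tt0 at1.
have t0te : t0 - eta < t.
  by apply: le_lt_trans t0t; rewrite lerD2l lerN2 ge_min lexx orbT.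
have [s1 [H1 H3]] := Heta t t0te tt0 at1.
have tb : t <= b by apply: le_trans (ltW tt0) t0b.
have dgt : d (g t) (g t0) < e / 2.
  rewrite metricC //; apply: Hdel; first by rewrite at1 tb.
  rewrite ger0_norm ?subr_ge0 ?ltW // ltrBlDl addrC -ltrBlDl.
  by apply: le_lt_trans t0t; rewrite lerD2l lerN2 ge_min lexx.
have s1le : s1 <= arclen a t by apply: chord_sums_le_arclen.
have := arclen_add (lexx a) at1 (ltW tt0) t0b.
rewrite -/(arclen a t0) in Hss; lra.
Qed.

Lemma arclen_ivt sig : 0 <= sig -> sig <= arclen a b ->
  exists t, [/\ a <= t, t <= b & arclen a t = sig].
Proof.
move=> s0 sab; have ab : a <= b by case: cg.
pose A := [set t | a <= t /\ t <= b /\ arclen a t <= sig].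
have A0 : A a by split => //; split => //; rewrite arclen_xx.
have hA : has_sup A by split; [exists a | exists b => t [_ []]].
pose c := sup A.
have ac : a <= c by apply: ub_le_sup => //; case: hA.
have cb : c <= b by apply: ge_sup => //; [exists a | move=> t [_ []]].
exists c; split => //.
have [lt1|ge1] := ltP (arclen a c) sig.
  exfalso.
  have cb' : c < b.
    rewrite lt_neqAle cb andbT; apply/eqP => E; move: lt1; rewrite E.
    by rewrite ltNge sab.
  have := @arclen_small_right c ac cb' (sig - arclen a c).
  rewrite subr_gt0 => /(_ lt1) [eta eta0 H].
  pose t := Num.min (c + eta / 2) b.
  have ct : c < t by rewrite lt_min cb' ltrDl divr_gt0.
  have tb : t <= b by rewrite ge_min lexx orbT.
  have tce : t < c + eta.
    apply: le_lt_trans (_ : _ <= c + eta / 2) _; first by rewrite ge_min lexx.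
    by rewrite ltrD2l ltr_pdivrMr // ltr_pMr // ltr1n.
  have := H t ct tce tb.
  rewrite ltrBrDl (arclen_add (lexx a) ac (ltW ct) tb) => lt2.
  have : A t by split; [apply: le_trans ac (ltW ct) | split => //; apply: ltW].
  by move=> /(ub_le_sup (proj2 hA)) => /(lt_le_trans ct); rewrite ltxx.
move: ge1; rewrite le_eqVlt => /predU1P[->//|gt1]; exfalso.
have ac' : a < c.
  rewrite lt_neqAle ac andbT; apply/eqP => E; move: gt1; rewrite -E arclen_xx.
  by rewrite ltNge s0.
have := @arclen_small_left c ac' cb (arclen a c - sig).
rewrite subr_gt0 => /(_ gt1) [eta eta0 H].
have [t [at1 [tb ts]] Ht] := sup_adherent eta0 hA.
have tc : t <= c by apply: ub_le_sup; [case: hA | by split].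
move: tc; rewrite le_eqVlt => /predU1P[tc|tc].
  by move: gt1; rewrite -tc ltNge ts.
have E := arclen_add (lexx a) at1 (ltW tc) cb.
have lt2 := H t Ht tc at1.
lra.
Qed.

Lemma exists_arclength_param : exists gs, arclength_param d g a b gs /\
  forall s, 0 <= s <= arclen a b -> d (g a) (gs s) <= s.
Proof.
pose P s := [set t | (a <= t /\ t <= b) /\ arclen a t = s].
exists (fun s => g (xget a (P s))); split.
  move=> t /andP[at1 tb]; rewrite curve_length_arclen //=.
  have [[at' t'b] Et] : P (arclen a t) (xget a (P (arclen a t))).
    by apply: xgetPex; exists t.
  have g_eq u v : a <= u -> u <= v -> v <= b -> arclen a u = arclen a v -> g u = g v.
    move=> au uv vb E; apply/(metric_eq0 dm)/eqP; rewrite eq_le metric_ge0 // andbT.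
    have := arclen_add (lexx a) au uv vb; rewrite E -[X in _ = X]addr0 => /addrI <-.
    exact: arclen_ge_dist.
  by have [tt'|t't] := leP t (xget a (P (arclen a t)));
    [apply/esym/g_eq | apply: g_eq => //; apply: ltW].
move=> s /andP[s0 sl]; have [t [at1 tb ts]] := arclen_ivt s0 sl.
set t' := xget a (P s); have [[at' t'b] <-] : P s t' by apply: xgetPex; exists t.
exact: arclen_ge_dist (lexx a) at' t'b.
Qed.

End Arclength.

(* No measurability is needed: both sides are sups over nonnegative simple
   functions below the integrand. *)
Lemma ge0_le_integral_subset (dd : measure_display) (T : measurableType dd) (R : realType)
    (mu : {measure set T -> \bar R}) (A B : set T) (f g : T -> \bar R) :
  (forall x, A x -> (0 <= f x)%E) -> (forall x, B x -> (0 <= g x)%E) ->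
  A `<=` B -> (forall x, A x -> (f x <= g x)%E) ->
  (\int[mu]_(x in A) f x <= \int[mu]_(x in B) g x)%E.
Proof.
move=> f0 g0 AB fg; rewrite !ge0_integralE //.
apply: ge_ereal_sup => _ [h /= hf <-]; apply: ereal_sup_ubound => /=.
exists h => // x; apply: le_trans (hf x) _.
rewrite /patch; case: ifPn => Ax; last first.
  by case: ifPn => // Bx; apply: g0; rewrite -inE.
have Bx : x \in B by rewrite inE; apply: AB; rewrite -inE.
by rewrite Bx; apply: fg; rewrite -inE.
Qed.

Section IntervalIntegrals.
Variable R : realType.
Local Notation mu := (@lebesgue_measure R).

Lemma is_derive_continuous (F : R -> R) (x df : R) : is_derive x 1 F df ->
  F x0 @[x0 --> x] --> F x.
Proof.
by move=> H; apply: differentiable_continuous; apply/derivable1_diffP; exact: ex_derive.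
Qed.

Lemma integral_itv0_derive (f F : R -> R) (l : R) : 0 < l ->
  (forall x, 0 <= x <= l -> f x0 @[x0 --> x] --> f x) ->
  (forall x, 0 <= x <= l -> is_derive x 1 F (f x)) ->
  (\int[mu]_(x in `[0%R, l]) (f x)%:E = (F l - F 0)%:E)%E.
Proof.
move=> l0 cf dF.
have dF' x : 0 <= x <= l -> derivable F x 1 /\ F^`()%classic x = f x.
  by move=> /dF Fx; split; [exact: ex_derive | rewrite derive1E derive_val].
rewrite (@continuous_FTC2 _ _ F) //.
- apply: continuous_in_subspaceT => x; rewrite inE /= in_itv /= => Hx.
  exact: cf.
- split.
  + by move=> x; rewrite in_itv /= => /andP[x0 xl]; case: (dF' x); rewrite ?ltW.
  + by apply: cvg_at_right_filter; apply: is_derive_continuous (dF 0 _); rewrite lexx ltW.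
  + by apply: cvg_at_left_filter; apply: is_derive_continuous (dF l _); rewrite lexx ltW.
- by move=> x; rewrite in_itv /= => /andP[x0 xl]; case: (dF' x); rewrite ?ltW.
Qed.

Lemma is_derive_addl (p x : R) : is_derive x 1 (fun y : R => p + y) 1.
Proof.
by have := is_deriveD (is_derive_cst p x 1) (is_derive_id x (1:R)); rewrite add0r.
Qed.

Lemma is_derive_subl (q x : R) : is_derive x 1 (fun y : R => q - y) (-1).
Proof.
by have := is_deriveD (is_derive_cst q x 1) (is_deriveN (is_derive_id x (1:R))); rewrite add0r.
Qed.

Lemma ln_ratio_le_integral_inv (p l : R) : 0 < p -> 0 <= l ->
  ((ln (p + l) - ln p)%:E <= \int[mu]_(x in `[0%R, l]) ((p + x)^-1)%:E)%E.
Proof.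
move=> p0; rewrite le_eqVlt => /predU1P[<-|l0].
  rewrite addr0 subrr; apply: integral_ge0 => x; rewrite /= in_itv /= => /andP[x0 _].
  by rewrite lee_fin invr_ge0 addr_ge0 // ltW.
have cf x : 0 <= x <= l -> (fun y => (p + y)^-1) y0 @[y0 --> x] --> (p + x)^-1.
  move=> /andP[x0 _]; apply: (@continuousV _ _ (fun y => p + y)).
    by rewrite gt_eqF // ltr_wpDr.
  exact: is_derive_continuous (is_derive_addl p x).
have dF x : 0 <= x <= l -> is_derive x 1 (fun x => ln (p + x)) ((p + x)^-1).
  move=> /andP[x0 _].
  have := is_derive1_comp (is_derive1_ln (_ : 0 < p + x)) (is_derive_addl p x).
  by rewrite mulr1; apply; rewrite ltr_wpDr.
by rewrite (integral_itv0_derive l0 cf dF) [p + 0]addr0.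
Qed.

Lemma ln_ratio_le_integral_inv_rev (p l : R) : 0 < p -> 0 <= l ->
  ((ln (p + l) - ln p)%:E <= \int[mu]_(x in `[0%R, l]) ((p + l - x)^-1)%:E)%E.
Proof.
move=> p0; rewrite le_eqVlt => /predU1P[<-|l0].
  rewrite addr0 subrr; apply: integral_ge0 => x; rewrite /= in_itv /= => /andP[x0 x1].
  by rewrite lee_fin invr_ge0 subr_ge0 (le_trans x1) // ltW.
have pos x : 0 <= x <= l -> 0 < p + l - x.
  by move=> /andP[_ xl]; rewrite subr_gt0; apply: le_lt_trans xl _; rewrite ltrDr.
have cf x : 0 <= x <= l -> (fun y => (p + l - y)^-1) y0 @[y0 --> x] --> (p + l - x)^-1.
  move=> /pos px; apply: (@continuousV _ _ (fun y => p + l - y)); first by rewrite gt_eqF.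
  exact: is_derive_continuous (is_derive_subl (p + l) x).
have dF x : 0 <= x <= l -> is_derive x 1 (fun x => - ln (p + l - x)) ((p + l - x)^-1).
  move=> /pos px.
  have := is_deriveN (@is_derive1_comp _ (@ln R) (fun y => p + l - y) x _ _
    (is_derive1_ln px) (is_derive_subl (p + l) x)).
  by rewrite mulrN1 opprK.
rewrite (integral_itv0_derive l0 cf dF) subr0 -addrA subrr addr0 opprK.
by rewrite addrC.
Qed.

Lemma integral_itv0_cst (c l : R) : 0 <= l ->
  (\int[mu]_(x in `[0%R, l]) c%:E = (c * l)%:E)%E.
Proof.
move=> l0; rewrite integral_cst //= lebesgue_measure_itv /= lte_fin.
move: l0; rewrite le_eqVlt => /predU1P[<-|->]; first by rewrite ltxx mule0 mulr0.
by rewrite oppr0 addr0 -EFinM.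
Qed.

Lemma line_integral_le (rho : R -> R) (l K : R) : 0 <= l ->
  (forall s, 0 <= s <= l -> 0 <= rho s <= K) ->
  (line_integral rho l <= (K * l)%:E)%E.
Proof.
move=> l0 H; rewrite /line_integral -integral_itv0_cst //.
apply: ge0_le_integral_subset => // s; rewrite /= ?in_itv /= => /H /andP[r0 rK].
- by rewrite lee_fin.
- by rewrite lee_fin (le_trans r0).
- by rewrite lee_fin.
Qed.

Lemma le_line_integral (rho h : R -> R) (l : R) :
  (forall s, 0 <= s <= l -> 0 <= h s <= rho s) ->
  (\int[mu]_(x in `[0%R, l]) (h x)%:E <= line_integral rho l)%E.
Proof.
move=> H; apply: ge0_le_integral_subset => // s; rewrite /= ?in_itv /= => /H /andP[h0 hr].
- by rewrite lee_fin.
- by rewrite lee_fin (le_trans h0).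
- by rewrite lee_fin.
Qed.

End IntervalIntegrals.

Section QuasihyperbolicBalls.
Variables (R : realType) (T : Type) (d : T -> T -> R) (X : Type)
  (dX : X -> X -> R) (iota : T -> X).
Hypothesis dm : is_metric d.
Hypothesis oc : open_completion d dX iota.
Hypothesis bd : exists z : X, ~ range iota z.

Local Notation dO := (dist_bdry dX iota).
Local Notation k := (qh_dist d dO).

Let dXm : is_metric dX. Proof. by case: oc. Qed.
Let diso x y : dX (iota x) (iota y) = d x y. Proof. by case: oc => _ H _ _ _; apply: H. Qed.

Let bdry_dists x := [set dX (iota x) z | z in ~` range iota].

Let bdry_dists_neq0 x : bdry_dists x !=set0.
Proof. by case: bd => z hz; exists (dX (iota x) z); exists z. Qed.

Let bdry_dists_lb x : has_lbound (bdry_dists x).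
Proof. by exists 0 => _ [z _ <-]; apply: metric_ge0. Qed.

(* Positivity is where openness of the image of iota is used. *)
Lemma dist_bdry_gt0 x : 0 < dO x.
Proof.
case: oc => _ _ _ _ /(_ (iota x)) [|e e0 He]; first by exists x.
apply: lt_le_trans e0 _; apply: lb_le_inf (bdry_dists_neq0 x) _ => _ [z hz <-].
by rewrite leNgt; apply/negP => hlt; apply: hz; exact: He.
Qed.

Lemma dist_bdry_lipschitz x y : dO y <= dO x + d x y.
Proof.
rewrite addrC -lerBlDl; apply: lb_le_inf (bdry_dists_neq0 x) _ => _ [z hz <-].
rewrite lerBlDl; apply: le_trans (ge_inf (bdry_dists_lb y) _) _; first by exists z.
by rewrite (metricC dm x y) -diso; exact: metric_le_triangle.
Qed.

Lemma qh_dist_lt_curve x y K : (k x y < K%:E)%E ->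
  exists (l : R) (rho : R -> R), [/\ 0 <= l, d x y <= l,
    (line_integral rho l < K%:E)%E &
    forall s, 0 <= s <= l -> exists z, [/\ rho s = (dO z)^-1, d x z <= s & d z y <= l - s]].
Proof.
move=> /ereal_inf_lt [_ [a [b [g [gs [cg ga gb [fin arc] ->]]]]] HK].
have ab : a <= b by case: cg.
have Hl := curve_length_arclen dm fin (lexx a) ab (lexx b).
exists (arclen d g a b), (fun s => (dO (gs s))^-1); rewrite Hl /= in HK; split => //.
- exact: (arclen_ge0 dm fin (lexx a) ab (lexx b)).
- by rewrite -ga -gb; exact: (arclen_ge_dist dm fin (lexx a) ab (lexx b)).
move=> s /andP[s0 sl]; have [t [at1 tb ts]] := arclen_ivt dm cg fin s0 sl.
have gst : gs s = g t.
  by rewrite -ts -(arc t (andb_true_intro (conj at1 tb))) (curve_length_arclen dm fin (lexx a) at1 tb).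
exists (g t); split; first by rewrite gst.
- by rewrite -ga -ts; exact: (arclen_ge_dist dm fin (lexx a) at1 tb).
- rewrite -gb -ts -(arclen_add dm fin (lexx a) at1 tb (lexx b)) (addrC (arclen d g a t)) addrK.
  exact: (arclen_ge_dist dm fin at1 tb (lexx b)).
Qed.

Lemma qh_dist_lt_ratio x y K : (k x y < K%:E)%E ->
  exists l, [/\ 0 <= l, d x y <= l & l / (dO x + l) < K].
Proof.
move=> /qh_dist_lt_curve [l [rho [l0 dl HK Hz]]].
have c0 := dist_bdry_gt0 x.
exists l; split => //.
rewrite -lte_fin; apply: le_lt_trans HK.
rewrite (mulrC l) -integral_itv0_cst //; apply: le_line_integral => s Hs.
have [z [-> dxz dzy]] := Hz s Hs.
apply/andP; split; first by rewrite invr_ge0 addr_ge0 // ltW.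
have z0 := dist_bdry_gt0 z.
rewrite lef_pV2 ?posrE ?ltr_wpDr //.
apply: le_trans (dist_bdry_lipschitz x z) _; rewrite lerD2l; apply: le_trans dxz _.
by case/andP: Hs.
Qed.

(* At arc length s from x, 1/dO is at least 1/(dO x + s); integrate. *)
Lemma qh_dist_lt_ln_start x y K : (k x y < K%:E)%E ->
  exists l, [/\ 0 <= l, d x y <= l & ln (dO x + l) - ln (dO x) < K].
Proof.
move=> /qh_dist_lt_curve [l [rho [l0 dl HK Hz]]].
have c0 := dist_bdry_gt0 x.
exists l; split => //.
rewrite -lte_fin; apply: le_lt_trans HK.
apply: le_trans (ln_ratio_le_integral_inv c0 l0) _; apply: le_line_integral => s Hs.
have [z [-> dxz dzy]] := Hz s Hs.
case/andP: Hs => s0 sl.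
apply/andP; split; first by rewrite invr_ge0 addr_ge0 // ltW.
have z0 := dist_bdry_gt0 z.
rewrite lef_pV2 ?posrE ?ltr_wpDr //.
by apply: le_trans (dist_bdry_lipschitz x z) _; rewrite lerD2l.
Qed.

Lemma qh_dist_lt_ln_end x y K : (k x y < K%:E)%E ->
  exists l, [/\ 0 <= l, d x y <= l & ln (dO y + l) - ln (dO y) < K].
Proof.
move=> /qh_dist_lt_curve [l [rho [l0 dl HK Hz]]].
have c0 := dist_bdry_gt0 y.
exists l; split => //.
rewrite -lte_fin; apply: le_lt_trans HK.
apply: le_trans (ln_ratio_le_integral_inv_rev c0 l0) _; apply: le_line_integral => s Hs.
have [z [-> dxz dzy]] := Hz s Hs.
case/andP: Hs => s0 sl.
have pos : 0 < dO y + l - s by lra.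
apply/andP; split; first by rewrite invr_ge0 ltW.
have z0 := dist_bdry_gt0 z.
rewrite lef_pV2 ?posrE //.
by apply: le_trans (dist_bdry_lipschitz y z) _; rewrite -addrA lerD2l metricC.
Qed.

Lemma le_kball x r s : r <= s -> kball k x r `<=` kball k x s.
Proof. by move=> rs y; rewrite /kball /= => h; apply: lt_le_trans h _; rewrite lee_fin. Qed.

Lemma kball_sub_dball x r : 0 < r < 1 ->
  kball k x r `<=` dball d x (r * dO x / (1 - r)).
Proof.
move=> /andP[r0 r1] y; rewrite /dball /kball /= => /qh_dist_lt_ratio [l [l0 dl hl]].
have c0 := dist_bdry_gt0 x.
move: hl; rewrite ltr_pdivrMr ?ltr_wpDr // => hl.
apply: le_lt_trans dl _; rewrite ltr_pdivlMr ?subr_gt0 //; lra.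
Qed.

Lemma kball_sub_dball_exp x K : kball k x K `<=` dball d x (dO x * expR K).
Proof.
move=> y; rewrite /kball /dball /= => /qh_dist_lt_ln_start [l [l0 dl hl]].
have c0 := dist_bdry_gt0 x.
have cl : 0 < dO x + l by rewrite ltr_wpDr.
have h : expR (ln (dO x + l)) < expR (ln (dO x) + K) by rewrite ltr_expR; lra.
rewrite expRD !lnK ?posrE // in h; lra.
Qed.

Lemma dist_bdry_gt_kball x K y : kball k x K y -> dO x * expR (- K) < dO y.
Proof.
rewrite /kball /= => /qh_dist_lt_ln_end [l [l0 dl hl]].
have c0 := dist_bdry_gt0 x; have y0 := dist_bdry_gt0 y.
have cyl : dO x <= dO y + l.
  by apply: le_trans (dist_bdry_lipschitz y x) _; rewrite lerD2l metricC.
have : ln (dO x) - ln (dO y) < K.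
  by apply: le_lt_trans hl; rewrite lerD2r ler_ln ?posrE ?ltr_wpDr.
move=> h1; have h : expR (ln (dO x) + - K) < expR (ln (dO y)) by rewrite ltr_expR; lra.
by rewrite expRD !lnK ?posrE in h.
Qed.

Section Quasiconvex.
Variable L : R.
Hypothesis qc : quasiconvex d L.

(* Two distinct points exist because the completion adds a boundary point. *)
Lemma quasiconvex_const_ge1 : 1 <= L.
Proof.
have [z hz] := bd.
case: oc => _ _ dens _ _.
have [x0 hx0] := dens z 1 ltr01.
have e0 : 0 < dX z (iota x0).
  rewrite lt_neqAle metric_ge0 // andbT; apply/eqP => /esym /(metric_eq0 dXm) E.
  by apply: hz; exists x0.
have [x1 hx1] := dens z (dX z (iota x0) / 2) (divr_gt0 e0 (ltr0n _ 2)).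
have d01 : 0 < d x0 x1.
  rewrite lt_neqAle metric_ge0 // andbT; apply/eqP => /esym /(metric_eq0 dm) x01.
  by move: hx1; rewrite -x01 => h; lra.
have [a [b [g [cg ga gb hlen]]]] := qc x0 x1.
have ab : a <= b by case: cg.
have : ((d x0 x1)%:E <= curve_length d g a b)%E.
  rewrite curve_lengthE; apply: ereal_sup_ubound; exists (d x0 x1) => //.
  by rewrite -ga -gb; apply: chord_sums_chord.
move=> /le_trans /(_ hlen); rewrite lee_fin -{1}(mul1r (d x0 x1)).
by rewrite ler_pM2r.
Qed.

Lemma qh_dist_le_quasiconvex x y : L * d x y < dO x ->
  (k x y <= (L * d x y / (dO x - L * d x y))%:E)%E.
Proof.
move=> Hc.
have [a [b [g [cg ga gb hlen]]]] := qc x y.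
have ab : a <= b by case: cg.
have fin : (curve_length d g a b < +oo)%E by apply: le_lt_trans hlen _; rewrite ltey.
have Hl := curve_length_arclen dm fin (lexx a) ab (lexx b).
set l := arclen d g a b in Hl.
have l0 : 0 <= l := arclen_ge0 dm fin (lexx a) ab (lexx b).
have lm : l <= L * d x y by rewrite -lee_fin -Hl.
have [gs [arc near]] := exists_arclength_param dm cg fin.
have Hk : (k x y <= line_integral (fun s => ((dO (gs s))^-1)%R) l)%E.
  by apply: ereal_inf_lbound; exists a, b, g, gs; split => //; rewrite Hl.
apply: (le_trans Hk).
have cl : 0 < dO x - l by rewrite subr_gt0; apply: le_lt_trans lm Hc.
apply: le_trans (line_integral_le (K := (dO x - l)^-1) l0 _) _.
  move=> s Hs; have := near s Hs; rewrite ga => dxs; case/andP: Hs => s0 sl.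
  have z0 := dist_bdry_gt0 (gs s).
  apply/andP; split; first by rewrite invr_ge0 ltW.
  rewrite lef_pV2 ?posrE //.
  have := dist_bdry_lipschitz (gs s) x; rewrite (metricC dm); lra.
have cm : 0 < dO x - L * d x y by rewrite subr_gt0.
rewrite lee_fin mulrC ler_pdivrMr // mulrAC ler_pdivlMr //; nra.
Qed.

Lemma dball_sub_kball x r : 0 < r ->
  dball d x (r * dO x / (L * (1 + r))) `<=` kball k x r.
Proof.
move=> r0 y; rewrite /dball /kball /= => hy.
have c0 := dist_bdry_gt0 x.
have L0 : 0 < L by apply: lt_le_trans quasiconvex_const_ge1.
have Lr : 0 < L * (1 + r) by rewrite mulr_gt0 // addr_gt0.
move: hy; rewrite ltr_pdivlMr // => hy.
have hm : L * d x y * (1 + r) < r * dO x by rewrite (mulrC L) -mulrA.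
have m0 : 0 <= L * d x y by rewrite mulr_ge0 ?metric_ge0 // ltW.
have mc : L * d x y < dO x by nra.
apply: le_lt_trans (qh_dist_le_quasiconvex mc) _.
rewrite lte_fin ltr_pdivrMr ?subr_gt0 //; lra.
Qed.

End Quasiconvex.
End QuasihyperbolicBalls.

Lemma ler_powRN (R : realType) (a u v : R) : 0 <= a -> 0 < u -> u <= v ->
  v `^ (- a) <= u `^ (- a).
Proof.
move=> a0 u0 uv; have v0 := lt_le_trans u0 uv.
rewrite !powRN lef_pV2 ?posrE ?powR_gt0 //.
by apply: ge0_ler_powR => //; rewrite nnegrE ltW.
Qed.

Lemma powRN_div (R : realType) (a u v : R) : 0 < u -> 0 < v ->
  u `^ (- a) / v `^ (- a) = (v / u) `^ a.
Proof.
move=> u0 v0; have uV : (u^-1) `^ a = (u `^ a)^-1.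
  apply: (mulfI (_ : u `^ a != 0)); first by rewrite gt_eqF ?powR_gt0.
  by rewrite -powRM ?invr_ge0 ?ltW // divff ?gt_eqF // powR1 divff // gt_eqF ?powR_gt0.
by rewrite !powRN invrK powRM ?invr_ge0 ?ltW // uV mulrC.
Qed.

Section WeightedDoubling.
Variables (R : realType) (dd : measure_display) (T : measurableType dd)
  (d : T -> T -> R) (mu : {measure set T -> \bar R}) (Cmu alpha : R) (dO : T -> R).
Hypothesis dm : is_metric d.
Hypothesis hB : @measurable _ T = <<s [set U | dopen d U] >>.
Hypothesis hdbl : doubling_global mu (dball d) Cmu.
Hypothesis a0 : 0 <= alpha.
Hypothesis dO_gt0 : forall y, 0 < dO y.

Local Notation nu := (weighted_measure mu dO alpha).

Lemma dopen_dball x r : dopen d (dball d x r).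
Proof.
move=> y; rewrite /dball /= => hy; exists (r - d x y); first by rewrite subr_gt0.
by move=> z; rewrite /dball /= => hz; have := metric_le_triangle dm x y z; lra.
Qed.

Lemma measurable_dball x r : measurable (dball d x r).
Proof. by rewrite hB; apply: sub_gen_smallest; apply: dopen_dball. Qed.

Lemma le_mu_dball x r s : r <= s -> (mu (dball d x r) <= mu (dball d x s))%E.
Proof.
move=> rs; apply: le_measure; rewrite ?inE; try exact: measurable_dball.
by move=> y; rewrite /dball /= => h; apply: lt_le_trans h rs.
Qed.

Lemma mu_dball_gt0 x r : 0 < r -> (0 < mu (dball d x r))%E.
Proof.
move=> r0; have := hdbl x (_ : 0 < r / 2); rewrite divr_gt0 // => /(_ isT) [+ _ _].
by rewrite mulrC divfK // pnatr_eq0.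
Qed.

Lemma doubling_const_gt0 (x : T) : 0 < Cmu.
Proof.
have [H1 H2 _] := hdbl x ltr01.
rewrite ltNge; apply/negP => C0.
have : (Cmu%:E * mu (dball d x 1) <= 0)%E by apply: mule_le0_ge0; rewrite ?lee_fin.
by move=> H; have := lt_le_trans H1 (le_trans H2 H); rewrite ltxx.
Qed.

Lemma mu_dball_expn (x : T) n r : 0 < r ->
  (mu (dball d x ((2:R) ^+ n * r)) <= (Cmu ^+ n)%:E * mu (dball d x r))%E.
Proof.
move=> r0; elim: n => [|n IH]; first by rewrite expr0 mul1r mul1e.
have [_ H _] := hdbl x (mulr_gt0 (exprn_gt0 n (ltr0Sn R 1)) r0).
rewrite exprS -mulrA; apply: (le_trans H).
rewrite exprS EFinM -muleA; apply: lee_wpmul2l => //.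
by rewrite lee_fin ltW // (doubling_const_gt0 x).
Qed.

Lemma weighted_measure_ge0 (A : set T) : (0 <= nu A)%E.
Proof. by apply: integral_ge0 => y _; rewrite lee_fin powR_ge0. Qed.

Lemma le_weighted_measure (A B : set T) : A `<=` B -> (nu A <= nu B)%E.
Proof. by move=> AB; apply: ge0_le_integral_subset => // y _; rewrite lee_fin powR_ge0. Qed.

(* Between a d-ball of radius rs and one of radius rb <= 2^N rs the weight
   dO^-alpha varies by at most the factor (v/u)^alpha, and mu grows by at most
   Cmu^N. *)
Lemma weighted_measure_sandwich x (Bs Bb : set T) (rs rb u v : R) (N : nat) :
  0 < rs -> 0 < u -> rb <= 2 ^+ N * rs ->
  dball d x rs `<=` Bs -> Bs `<=` Bb -> Bb `<=` dball d x rb ->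
  (forall y, Bb y -> u <= dO y) -> (forall y, dball d x rs y -> dO y <= v) ->
  [/\ (0 < nu Bb)%E, (nu Bb <= ((v / u) `^ alpha * Cmu ^+ N)%:E * nu Bs)%E
    & (nu Bs < +oo)%E].
Proof.
move=> rs0 u0 rbN sBs sBb sBr Hu Hv.
have Cm0 := doubling_const_gt0 x.
have v0 : 0 < v by apply: lt_le_trans (dO_gt0 x) (Hv x _); rewrite /dball /= metric_xx.
have A0 := mu_dball_gt0 x rs0.
have Afin : (fine (mu (dball d x rs)))%:E = mu (dball d x rs).
  by apply: fineK; rewrite ge0_fin_numE ?(ltW A0) //; case: (hdbl x rs0).
set A := fine (mu (dball d x rs)) in Afin.
have A_gt0 : 0 < A by rewrite -lte_fin Afin.
have lo : ((v `^ (- alpha) * A)%:E <= nu Bs)%E.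
  apply: le_trans (le_weighted_measure sBs).
  rewrite EFinM Afin -integral_cst; last exact: measurable_dball.
  apply: ge0_le_integral_subset => y; rewrite ?lee_fin ?powR_ge0 //.
  by move=> hy; apply: ler_powRN => //; apply: Hv.
have up : (nu Bb <= (u `^ (- alpha) * (Cmu ^+ N * A))%:E)%E.
  apply: (@le_trans _ _ ((u `^ (- alpha))%:E * mu (dball d x rb))%E).
    rewrite -integral_cst; last exact: measurable_dball.
    apply: ge0_le_integral_subset => // y; rewrite ?lee_fin ?powR_ge0 //.
    by move=> hy; apply: ler_powRN => //; apply: Hu.
  rewrite [X in (_ <= X)%E]EFinM; apply: lee_wpmul2l; first by rewrite lee_fin powR_ge0.
  apply: le_trans (le_mu_dball x rbN) _.
  by apply: le_trans (mu_dball_expn x N rs0) _; rewrite -Afin -EFinM.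
have lo0 : 0 < v `^ (- alpha) * A by rewrite mulr_gt0 ?powR_gt0.
split.
- by apply: lt_le_trans (le_weighted_measure sBb); apply: lt_le_trans lo; rewrite lte_fin.
- apply: (le_trans up); apply: le_trans (lee_wpmul2l _ lo).
    rewrite -EFinM lee_fin -(powRN_div alpha u0 v0) le_eqVlt; apply/orP; left.
    by apply/eqP; field; rewrite gt_eqF ?powR_gt0.
  by rewrite lee_fin mulr_ge0 ?exprn_ge0 ?powR_ge0 // ltW.
- by apply: le_lt_trans (le_weighted_measure sBb) _; apply: le_lt_trans up _; exact: ltey.
Qed.

End WeightedDoubling.

Lemma ceil_log2_ge (R : realType) (y : R) : 1 <= y ->
  exists n : nat, Num.ceil (ln y / ln 2) = n%:Z /\ y <= 2 ^+ n.
Proof.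
move=> y1; have y0 : 0 < y by apply: lt_le_trans y1.
have l2 : 0 < ln (2 : R) by rewrite ln_gt0 // ltr1n.
set m := Num.ceil _.
have hm : ln y / ln 2 <= m%:~R := ceil_ge _.
have m0 : 0 <= m.
  by rewrite -(ler0z R); apply: le_trans hm; apply: divr_ge0; [exact: ln_ge0 | exact: ltW].
exists `|m|%N; split; first by rewrite gez0_abs.
rewrite -ler_ln ?posrE ?exprn_gt0 // lnXn // -(mulr_natr (ln 2)).
move: hm; rewrite ler_pdivrMr // => hm; apply: le_trans hm _.
by rewrite mulrC -[m in m%:~R](gez0_abs m0).
Qed.

Section WeightedDoublingQuasihyperbolic.
Variables (R : realType) (dd : measure_display) (T : measurableType dd)
  (d : T -> T -> R) (X : Type) (dX : X -> X -> R) (iota : T -> X)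
  (L : R) (mu : {measure set T -> \bar R}) (Cmu alpha : R).
Hypothesis dm : is_metric d.
Hypothesis oc : open_completion d dX iota.
Hypothesis bd : exists z : X, ~ range iota z.
Hypothesis qc : quasiconvex d L.
Hypothesis hB : @measurable _ T = <<s [set U | dopen d U] >>.
Hypothesis hdbl : doubling_global mu (dball d) Cmu.
Hypothesis a0 : 0 < alpha.

Local Notation dO := (dist_bdry dX iota).
Local Notation k := (qh_dist d dO).
Local Notation nu := (weighted_measure mu dO alpha).

Let sandwich := weighted_measure_sandwich dm hB hdbl (ltW a0) (dist_bdry_gt0 oc bd).

Lemma dist_bdry_le_dball x rs y : rs <= dO x / 3 -> dball d x rs y -> dO y <= dO x * (4 / 3).
Proof. by rewrite /dball /= => rs3 dxy; have := dist_bdry_lipschitz dm oc bd x y; lra. Qed.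

Lemma dist_bdry_ge_dball x rb y : rb <= dO x / 3 -> dball d x rb y -> dO x * (2 / 3) <= dO y.
Proof.
rewrite /dball /= => rb3 dxy; have := dist_bdry_lipschitz dm oc bd y x.
by rewrite (metricC dm); lra.
Qed.

(* The d-balls of radii r dO(x) / (L (1 + r)) and 2 r dO(x) / (1 - 2 r) sandwich
   the k-balls of radii r and 2 r, and their ratio is at most 8 L <= 2^m. *)
Lemma weighted_doubling_small x r : 0 < r -> r <= 1 / 8 ->
  [/\ (0 < nu (kball k x (2 * r)))%E,
      (nu (kball k x (2 * r)) <=
        (4 `^ alpha * Cmu `^ ((Num.ceil (ln (8 * L) / ln 2))%:~R))%:E * nu (kball k x r))%E
    & (nu (kball k x r) < +oo)%E].
Proof.
move=> r0 r8; have L1 := quasiconvex_const_ge1 dm oc bd qc.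
have L8 : 1 <= 8 * L by lra.
have [n [-> hn]] := ceil_log2_ge L8.
have c0 := dist_bdry_gt0 oc bd x; set c := dO x in c0 *.
pose rs := r * c / (L * (1 + r)).
pose rb := 2 * r * c / (1 - 2 * r).
have Lr : 0 < L * (1 + r) by rewrite mulr_gt0 //; lra.
have rs0 : 0 < rs by apply: divr_gt0 => //; apply: mulr_gt0.
have rs3 : rs <= c / 3.
  rewrite /rs ler_pdivrMr // mulrAC ler_pdivlMr //.
  have h3 : 3 * r <= L * (1 + r) by nra.
  by have := ler_wpM2l (ltW c0) h3; lra.
have rb3 : rb <= c / 3.
  rewrite /rb ler_pdivrMr; last lra.
  have h8 : 0 <= 1 - 8 * r by lra.
  by have := mulr_ge0 (ltW c0) h8; lra.
have rbN : rb <= 2 ^+ n * rs.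
  apply: le_trans (_ : rb <= 8 * L * rs) _; last by rewrite ler_wpM2r // ltW.
  have -> : 8 * L * rs = 8 * r * c / (1 + r).
    by rewrite /rs; field; apply/andP; split; apply/lt0r_neq0; lra.
  rewrite /rb ler_pdivrMr; last lra.
  rewrite [X in _ <= X]mulrAC ler_pdivlMr; last lra.
  have h18 : 0 <= 6 - 18 * r by lra.
  by have := mulr_ge0 (mulr_ge0 (ltW r0) (ltW c0)) h18; lra.
have r21 : 0 < 2 * r < 1 by apply/andP; split; lra.
have r2 : r <= 2 * r by lra.
have u0 : 0 < c * (2 / 3) by rewrite mulr_gt0.
have [pos le fin] := sandwich rs0 u0 rbN (dball_sub_kball dm oc bd qc r0) (le_kball r2)
  (kball_sub_dball dm oc bd r21)
  (fun y hy => dist_bdry_ge_dball rb3 (kball_sub_dball dm oc bd r21 hy))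
  (fun y => dist_bdry_le_dball rs3).
split => //; apply: le_trans le _; apply: lee_wpmul2r; first exact: weighted_measure_ge0.
have -> : c * (4 / 3) / (c * (2 / 3)) = 2 by field; rewrite gt_eqF.
rewrite lee_fin powR_mulrn ?(ltW (doubling_const_gt0 hdbl x)) // ler_wpM2r ?exprn_ge0 //.
  by rewrite ltW ?(doubling_const_gt0 hdbl x).
by apply: ge0_ler_powR; rewrite ?nnegrE ?(ltW a0) //; lra.
Qed.

Lemma weighted_doubling_large R1 : 0 < R1 -> exists C : R, forall x r, 1 / 8 <= r -> r <= R1 ->
  [/\ (0 < nu (kball k x (2 * r)))%E, (nu (kball k x (2 * r)) <= C%:E * nu (kball k x r))%E
    & (nu (kball k x r) < +oo)%E].
Proof.
move=> R10; have L1 := quasiconvex_const_ge1 dm oc bd qc; pose K := 2 * R1.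
have eK : 1 <= expR K by have := expR_ge1Dx K; rewrite /K; lra.
have LeK : 1 <= 9 * L * expR K by nra.
have [N [_ hN]] := ceil_log2_ge LeK.
exists ((4 / 3 * expR K) `^ alpha * Cmu ^+ N) => x r r8 rR.
have c0 := dist_bdry_gt0 oc bd x; set c := dO x in c0 *.
pose rs := 1 / 8 * c / (L * (1 + 1 / 8)).
have L98 : 0 < L * (1 + 1 / 8) by rewrite mulr_gt0 //; lra.
have rs0 : 0 < rs by apply: divr_gt0 => //; apply: mulr_gt0.
have rs3 : rs <= c / 3.
  rewrite /rs ler_pdivrMr //.
  have h3 : 3 * (1 / 8) <= L * (1 + 1 / 8) by lra.
  by have := ler_wpM2l (ltW c0) h3; lra.
have rbN : c * expR K <= 2 ^+ N * rs.
  have -> : c * expR K = 9 * L * expR K * rs by rewrite /rs; field; lra.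
  by rewrite ler_wpM2r // ltW.
have r2 : r <= 2 * r by lra.
have r2K : 2 * r <= K by rewrite /K; lra.
have r80 : 0 < 1 / 8 :> R by [].
have [pos le fin] := sandwich rs0 (mulr_gt0 c0 (expR_gt0 (- K))) rbN
  (fun y hy => le_kball r8 (dball_sub_kball dm oc bd qc r80 hy)) (le_kball r2)
  (fun y hy => kball_sub_dball_exp dm oc bd (le_kball r2K hy))
  (fun y hy => ltW (dist_bdry_gt_kball dm oc bd (le_kball r2K hy)))
  (fun y => dist_bdry_le_dball rs3).
have ratio : c * (4 / 3) / (c * expR (- K)) = 4 / 3 * expR K.
  by clearbody c; rewrite expRN; field; rewrite !gt_eqF ?expR_gt0.
by rewrite -ratio.
Qed.

End WeightedDoublingQuasihyperbolic.

Unset Implicit Arguments.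

Theorem proposition7p3 (R : realType) (dd : measure_display) (T : measurableType dd)
  (d : T -> T -> R) (X : Type) (dX : X -> X -> R) (iota : T -> X)
  (L : R) (mu : {measure set T -> \bar R}) (Cmu alpha : R) :
  is_metric d ->
  open_completion d dX iota ->
  (exists z : X, ~ range iota z) ->
  quasiconvex d L ->
  @measurable _ T = <<s [set U | dopen d U] >> ->
  doubling_global mu (dball d) Cmu ->
  0 < alpha ->
  let dO := dist_bdry dX iota in
  let k := qh_dist d dO in
  let m : int := Num.ceil (ln (8 * L) / ln 2) in
  doubling_upto (weighted_measure mu dO alpha) (kball k) (1 / 8)
    (4 `^ alpha * Cmu `^ (m%:~R)) /\
  (forall R1 : R, 0 < R1 -> exists C : R,
    doubling_upto (weighted_measure mu dO alpha) (kball k) R1 C).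
Proof.
move=> dm oc bd qc hB hdbl a0 dO k m.
have small := weighted_doubling_small dm oc bd qc hB hdbl a0.
split=> [x r r0 r8|R1 R10]; first exact: small.
have [C2 large] := weighted_doubling_large dm oc bd qc hB hdbl a0 R10.
exists (Num.max (4 `^ alpha * Cmu `^ (m%:~R)) C2) => x r r0 rR.
have [r8|r8] := leP r (1 / 8).
  have [pos le fin] := small x r r0 r8; split => //; apply: le_trans le _.
  by apply: lee_wpmul2r; rewrite ?weighted_measure_ge0 // lee_fin le_max lexx.
have [pos le fin] := large x r (ltW r8) rR; split => //; apply: le_trans le _.
by apply: lee_wpmul2r; rewrite ?weighted_measure_ge0 // lee_fin le_max lexx orbT.
Qed.
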